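(* Let $n\ge 4$, $N=\{1,\dots,n\}$, fix distinct $i_1,i_2\in N$ and let $\hat N^c=N\setminus\{i_1,i_2\}$. Then the inequality $$\sum_{j\in\hat N^c}\left(x_{i_1j}+x_{ji_1}+x_{i_2j}\right)-x_{i_2i_1}-\sum_{j,j'\in\hat N^c:\,j\ne j'} x_{jj'}\le 3-\frac{(n-4)(n-5)}{2}$$ defines a facet of the weak order polytope $P^n_{WO}$.
   Context: Let $N=\{1,\dots,n\}$ and $A_N=\{(i,j): i,j\in N, i\ne j\}$. A weak order on $N$ is a binary relation $W\subseteq N\times N$ that is reflexive, transitive and total; $(i,j)\in W$ is read ''$i$ is preferred over or tied with $j$''. The characteristic vector of $W$ is $x^W\in\{0,1\}^{A_N}$ with $x^W_{(i,j)}=1$ if $(i,j)\in W$ and $0$ otherwise. The weak order polytope $P^n_{WO}$ is the convex hull of the characteristic vectors of all weak orders on $N$; its points are vectors $x\in\mathbb{R}^{A_N}$ and $x_{ij}$ denotes the coordinate $x_{(i,j)}$. $P^n_{WO}$ has dimension $n(n-1)$. An inequality $\pi x\le\pi_0$ defines a facet of a polytope $P$ if it is valid for $P$ (holds for all $x\in P$) and the face $P\cap\{x:\pi x=\pi_0\}$ is nonempty, proper, and contains $\dim(P)$ affinely independent points. *)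

From mathcomp Require Import all_boot all_order all_algebra.
Set Implicit Arguments. Unset Strict Implicit. Unset Printing Implicit Defensive.
Import Order.TTheory GRing.Theory Num.Theory.
Local Open Scope ring_scope.

Definition arc (n : nat) := {a : 'I_n * 'I_n | a.1 != a.2}.

Definition vec (R : Type) (n : nat) := arc n -> R.

Definition relN (n : nat) := {ffun 'I_n * 'I_n -> bool}.

Definition is_weak_order (n : nat) (W : relN n) : Prop :=
  (forall i, W (i, i)) /\
  (forall i j k, W (i, j) -> W (j, k) -> W (i, k)) /\
  (forall i j, W (i, j) || W (j, i)).

Definition charvec (R : numDomainType) (n : nat) (W : relN n) : vec R n :=
  fun a => if W (val a) then 1 else 0.

Definition in_PWO (R : numDomainType) (n : nat) (x : vec R n) : Prop :=
  exists lam : relN n -> R,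
    (forall W, 0 <= lam W) /\
    (forall W, ~ is_weak_order W -> lam W = 0) /\
    \sum_(W : relN n) lam W = 1 /\
    (forall a, x a = \sum_(W : relN n) lam W * charvec R W a).

Definition aff_indep (R : numDomainType) (n m : nat) (p : 'I_m -> vec R n) : Prop :=
  forall c : 'I_m -> R,
    (forall a, \sum_(k < m) c k * p k a = 0) -> \sum_(k < m) c k = 0 ->
    forall k, c k = 0.

Definition has_dim (R : numDomainType) (n : nat) (S : vec R n -> Prop) (d : nat) : Prop :=
  (exists p : 'I_d.+1 -> vec R n, (forall k, S (p k)) /\ aff_indep p) /\
  (forall p : 'I_d.+2 -> vec R n, (forall k, S (p k)) -> ~ aff_indep p).

Definition lin (R : numDomainType) (n : nat) (pi x : vec R n) : R :=
  \sum_(a : arc n) pi a * x a.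

Definition is_facet (R : numDomainType) (n : nat) (S : vec R n -> Prop)
  (pi : vec R n) (pi0 : R) : Prop :=
  (forall x, S x -> lin pi x <= pi0) /\
  (exists x, S x /\ lin pi x = pi0) /\
  (exists x, S x /\ lin pi x != pi0) /\
  (exists d, has_dim S d /\
     exists p : 'I_d -> vec R n,
       (forall k, S (p k) /\ lin pi (p k) = pi0) /\ aff_indep p).

Definition pi_ineq (R : numDomainType) (n : nat) (i1 i2 : 'I_n) : vec R n :=
  fun a =>
    let i := (val a).1 in let j := (val a).2 in
    let inC k := (k != i1) && (k != i2) in
    if (i == i1) && inC j then 1
    else if inC i && (j == i1) then 1
    else if (i == i2) && inC j then 1
    else if (i == i2) && (j == i1) then -1
    else if inC i && inC j then -1
    else 0.

Definition pi0_ineq (R : numFieldType) (n : nat) : R :=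
  3 - (n%:R - 4) * (n%:R - 5) / 2.

(* For a weak order W write w(x,y) = [W (x,y)], t(x,y) = [x and y tied] and m = n - 2.
   Since w(x,y) + w(y,x) = 1 + t(x,y), twice the slack of the inequality at x^W is
   2m - 2 (T1 + A2 - w(i2,i1)) + T, where T1 counts the j in N^c tied with i1, A2 the j in
   N^c with i2 above or tied with j, and T the ordered tied pairs inside N^c.  By
   transitivity the elements tied with i1 form a class of ties, so 2 T1 <= 2 + T, and if
   i2 is strictly below i1 no j is both tied with i1 and below i2, so T1 + A2 <= m: the
   slack is nonnegative.
   For facetness, the weak order polytope is full-dimensional (tying x and y or putting y
   strictly above x changes x^W only at (x,y)), and every affine equation c x + c0 = 0
   valid on the face is a multiple of (pi, -pi0): comparing eight tight weak orders that
   differ only in the ranking of i1, i2, u, k placed above all other elements determines c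
   arc by arc.  A rank computation in homogeneous coordinates turns these two facts into
   the required affinely independent points. *)

From mathcomp Require Import all_boot all_order all_algebra.
From mathcomp Require Import ring lra zify.
Set Implicit Arguments. Unset Strict Implicit. Unset Printing Implicit Defensive.
Import Order.TTheory GRing.Theory Num.Theory.
Local Open Scope ring_scope.

Section AffineIndependence.
Variables (R : realFieldType) (n : nat).
Local Notation D := #|{: arc n}|.

(* The row (x, t) of homogeneous coordinates, the arcs being listed by [enum_val]: points
   are affinely independent iff their rows (p k, 1) are linearly independent. *)
Definition hrow (x : vec R n) (t : R) : 'rV[R]_(D + 1) :=
  row_mx (\row_j x (enum_val j)) t%:M.

Lemma hrowEl x t j : hrow x t 0 (lshift 1 j) = x (enum_val j).
Proof. by rewrite row_mxEl mxE. Qed.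

Lemma hrowEr x t j : hrow x t 0 (rshift D j) = t.
Proof. by rewrite row_mxEr mxE ord1 mulr1n. Qed.

Lemma hrow_dot x t (v : 'rV[R]_(D + 1)) :
  \sum_j hrow x t 0 j * v 0 j =
  \sum_a x a * v 0 (lshift 1 (enum_rank a)) + t * v 0 (rshift D ord0).
Proof.
rewrite big_split_ord big_ord1 hrowEr; congr (_ + _).
rewrite (reindex (@enum_rank _)) /=; last by apply: onW_bij; exact: enum_rank_bij.
by apply: eq_bigr => a _; rewrite hrowEl enum_rankK.
Qed.

Lemma hrow_eq0 x t : hrow x t = 0 -> (forall a, x a = 0) /\ t = 0.
Proof.
move=> /rowP x0; split => [a|]; last by rewrite -(hrowEr x t ord0) x0 mxE.
by rewrite -(enum_rankK a) -(hrowEl x t) x0 mxE.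
Qed.

Lemma hrow0 : hrow (fun=> 0) 0 = 0.
Proof.
apply/rowP => j; rewrite [RHS]mxE -[j]splitK.
by case: (split j) => j' /=; rewrite ?hrowEl ?hrowEr.
Qed.

Definition points_mx d (p : 'I_d -> vec R n) : 'M[R]_(d, D + 1) :=
  \matrix_k hrow (p k) 1.

Lemma mul_points_mx d (p : 'I_d -> vec R n) (u : 'rV[R]_d) :
  u *m points_mx p = hrow (fun a => \sum_k u 0 k * p k a) (\sum_k u 0 k).
Proof.
apply/rowP => j; rewrite -[j]splitK [LHS]mxE; case: (split j) => j' /=;
  rewrite ?hrowEl ?hrowEr; apply: eq_bigr => k _;
  by rewrite [points_mx _ _ _]mxE ?hrowEl ?hrowEr ?mulr1.
Qed.

Lemma aff_indepP d (p : 'I_d -> vec R n) : aff_indep p <-> row_free (points_mx p).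
Proof.
split => [indep | free c csum c0 k].
  apply: inj_row_free => u /esym; rewrite mul_points_mx => /esym/hrow_eq0 [u1 u0].
  by apply/rowP => k; rewrite mxE; exact: indep.
have : (\row_k c k) *m points_mx p == 0.
  rewrite mul_points_mx; apply/eqP/rowP => j; rewrite [RHS]mxE -[j]splitK.
  case: (split j) => j' /=; rewrite ?hrowEl ?hrowEr.
    by rewrite -[RHS](csum (enum_val j')); apply: eq_bigr => i _; rewrite mxE.
  by rewrite -[RHS]c0; apply: eq_bigr => i _; rewrite mxE.
by rewrite mulmx_free_eq0 // => /eqP /rowP /(_ k); rewrite !mxE.
Qed.

Lemma aff_indep_card d (p : 'I_d -> vec R n) : aff_indep p -> (d <= D + 1)%N.
Proof.
by move/aff_indepP; rewrite -row_leq_rank => /leq_trans; apply; exact: rank_leq_col.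
Qed.

Lemma aff_indep_comp d d' (p : 'I_d' -> vec R n) (f : 'I_d -> 'I_d') :
  injective f -> aff_indep p -> aff_indep (p \o f).
Proof.
move=> f_inj indep c csum c0 k.
pose c' k' := \sum_(i | f i == k') c i.
have sum_c' (F : 'I_d' -> R) : \sum_k' c' k' * F k' = \sum_i c i * F (f i).
  rewrite (partition_big f predT) //=; apply: eq_bigr => k' _.
  by rewrite mulr_suml; apply: eq_bigr => i /eqP ->.
have c'E : c' (f k) = c k.
  by rewrite /c' (eq_bigl (pred1 k)) ?big_pred1_eq // => i; rewrite inj_eq.
rewrite -c'E; apply: indep => [a|]; first by rewrite sum_c'; exact: csum.
under eq_bigr do rewrite -[c' _]mulr1.
by rewrite (sum_c' (fun=> 1)); under eq_bigr do rewrite mulr1.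
Qed.

Lemma exists_aff_indep_rows d (p : 'I_d -> vec R n) :
  exists q : 'I_(\rank (points_mx p)) -> 'I_d, aff_indep (p \o q).
Proof.
set f := maxrankfun (points_mx p); exists f; apply/aff_indepP.
suff -> : points_mx (p \o f) = rowsub f (points_mx p) by exact: maxrowsub_free.
by apply/matrixP => i j; rewrite !mxE.
Qed.

Lemma rank_points_mx d (p : 'I_d -> vec R n) (w : vec R n) (w0 : R) :
  (forall c c0, (forall k, lin c (p k) + c0 = 0) ->
     exists l, (forall a, c a = l * w a) /\ c0 = l * w0) ->
  (D + 1 <= \rank (points_mx p) + \rank (hrow w w0))%N.
Proof.
(* The rows of the kernel of the transposed point matrix are the affine equations. *)
move=> eqns; set K := kermx (points_mx p)^T.
suff /mxrankS : (K <= hrow w w0)%MS by rewrite mxrank_ker mxrank_tr leq_subLR.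
apply/row_subP => i; set v := row i K.
have vA : v *m (points_mx p)^T = 0 by rewrite -row_mul mulmx_ker row0.
have /eqns [l [lc lc0]] : forall k,
    lin (fun a => v 0 (lshift 1 (enum_rank a))) (p k) + v 0 (rshift D ord0) = 0.
  move=> k; rewrite -[RHS](_ : (v *m (points_mx p)^T) 0 k = 0); last by rewrite vA mxE.
  rewrite [RHS]mxE; under [RHS]eq_bigr do rewrite [_^T _ _]mxE [points_mx _ _ _]mxE mulrC.
  by rewrite hrow_dot mul1r /lin; under eq_bigr do rewrite mulrC.
apply/sub_rVP; exists l; apply/rowP => j; rewrite -[j]splitK [RHS]mxE.
case: (split j) => j' /=.
  by rewrite hrowEl -lc enum_valK.
by rewrite ord1 hrowEr -lc0.
Qed.

Lemma exists_aff_indep (T : finType) (f : T -> vec R n) (w : vec R n) (w0 : R) d :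
  (forall c c0, (forall t, lin c (f t) + c0 = 0) ->
     exists l, (forall a, c a = l * w a) /\ c0 = l * w0) ->
  (d + \rank (hrow w w0) <= D + 1)%N ->
  exists q : 'I_d -> T, aff_indep (f \o q).
Proof.
move=> eqns le_d; pose p (i : 'I_#|{: T}|) := f (enum_val i).
have /(leq_trans le_d) : (D + 1 <= \rank (points_mx p) + \rank (hrow w w0))%N.
  apply: rank_points_mx => c c0 vanish.
  by apply: eqns => t; rewrite -(enum_rankK t); exact: vanish.
rewrite leq_add2r => le_d_rank.
have [q indep] := exists_aff_indep_rows p.
exists (enum_val \o q \o widen_ord le_d_rank).
have widen_inj : injective (widen_ord le_d_rank) by move=> i j [] /val_inj.
exact: aff_indep_comp widen_inj indep.
Qed.

Lemma exists_aff_indep_full (T : finType) (f : T -> vec R n) :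
  (forall c c0, (forall t, lin c (f t) + c0 = 0) -> (forall a, c a = 0) /\ c0 = 0) ->
  exists q : 'I_D.+1 -> T, aff_indep (f \o q).
Proof.
move=> eqns; apply: (@exists_aff_indep _ _ (fun=> 0) 0).
  move=> c c0 /eqns [c_0 c0_0]; exists 0.
  by rewrite c0_0 mul0r; split=> // a; rewrite c_0 mul0r.
by rewrite hrow0 mxrank0 addn0 addn1.
Qed.

Lemma exists_aff_indep_hyperplane (T : finType) (f : T -> vec R n) w w0 :
  (forall c c0, (forall t, lin c (f t) + c0 = 0) ->
     exists l, (forall a, c a = l * w a) /\ c0 = l * w0) ->
  exists q : 'I_D -> T, aff_indep (f \o q).
Proof.
by move=> eqns; apply: (exists_aff_indep eqns); rewrite leq_add2l rank_leq_row.
Qed.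

End AffineIndependence.

Section WeakOrders.
Variables (R : realFieldType) (n : nat).

Definition weak_orderb (W : relN n) : bool :=
  [&& [forall i, W (i, i)],
      [forall i, forall j, forall k, W (i, j) ==> W (j, k) ==> W (i, k)] &
      [forall i, forall j, W (i, j) || W (j, i)]].

Lemma weak_orderP W : reflect (is_weak_order W) (weak_orderb W).
Proof.
apply: (iffP and3P) => [[/forallP refl /forallP trans /forallP total]|[refl [trans total]]].
  split=> //; split=> [i j k|i j]; last by move/forallP: (total i).
  by move/forallP: (trans i) => /(_ j) /forallP /(_ k) /implyP H /H /implyP.
split; [exact/forallP | | by apply/forallP => i; apply/forallP].
apply/forallP => i; apply/forallP => j; apply/forallP => k.
by apply/implyP => Wij; apply/implyP; exact: trans.
Qed.

Lemma charvec_in_PWO (W : relN n) : is_weak_order W -> in_PWO (charvec R W).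
Proof.
move=> weakW; exists (fun V => (V == W)%:R); split; [|split; [|split]].
- by move=> V; rewrite ler0n.
- by move=> V; case: eqP => // -> /(_ weakW).
- by rewrite (bigD1 W) //= eqxx big1 ?addr0 // => V /negbTE ->.
- move=> a; rewrite (bigD1 W) //= eqxx mul1r big1 ?addr0 // => V /negbTE ->.
  by rewrite mul0r.
Qed.

Lemma PWO_lin_le (pi : vec R n) (pi0 : R) x :
  (forall W, is_weak_order W -> lin pi (charvec R W) <= pi0) ->
  in_PWO x -> lin pi x <= pi0.
Proof.
move=> valid [lam [lam_ge0 [lam_weak [lam_sum xE]]]].
have -> : lin pi x = \sum_W lam W * lin pi (charvec R W).
  rewrite /lin (eq_bigr _ (fun a _ => congr1 ( *%R (pi a)) (xE a))).
  under eq_bigr do rewrite mulr_sumr; rewrite exchange_big /=.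
  by apply: eq_bigr => W _; rewrite mulr_sumr; apply: eq_bigr => a _; rewrite mulrCA.
rewrite -[pi0]mul1r -lam_sum mulr_suml; apply: ler_sum => W _.
have [/weak_orderP/valid|/negP notweak] := boolP (weak_orderb W).
  exact: ler_wpM2l.
by rewrite lam_weak ?mul0r // => /weak_orderP.
Qed.

(* The coordinate of [c] at the arc (i, j); junk value 0 on the diagonal. *)
Definition coef (c : vec R n) (i j : 'I_n) : R :=
  if insub (i, j) is Some a then c a else 0.

Lemma coef_arc c (a : arc n) : coef c (val a).1 (val a).2 = c a.
Proof. by rewrite /coef -surjective_pairing valK. Qed.

Lemma coef_diag c i : coef c i i = 0.
Proof. by rewrite /coef insubN //= eqxx. Qed.

Lemma coefE c i j (ij : i != j) : coef c i j = c (exist _ (i, j) ij).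
Proof. by rewrite /coef insubT. Qed.

Lemma lin_charvec c (W : relN n) :
  lin c (charvec R W) = \sum_i \sum_j coef c i j * (W (i, j))%:R.
Proof.
rewrite pair_bigA /= (bigID (fun p : 'I_n * 'I_n => p.1 != p.2)) /=.
rewrite [X in _ = _ + X]big1 ?addr0; last first.
  by move=> [i j] /negbNE /= /eqP ->; rewrite coef_diag mul0r.
rewrite /lin (reindex_omap (val : arc n -> _) insub); last first.
  by move=> p hp; rewrite insubT.
apply: eq_big => [a|a _]; first by rewrite valK eqxx (valP a).
by rewrite coef_arc -surjective_pairing /charvec; case: (W _).
Qed.

Definition score_order (s : 'I_n -> nat) : relN n := [ffun p => (s p.2 <= s p.1)%N].

Lemma score_order_weak s : is_weak_order (score_order s).
Proof.
split; [|split] => [i|i j k|i j]; rewrite !ffunE //=; last exact: leq_total.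
by move=> sji skj; exact: leq_trans skj sji.
Qed.

Definition top_score (S : seq 'I_n) (h : 'I_n -> nat) (x : 'I_n) : nat :=
  if x \in S then (n + h x)%N else x.

Lemma top_score_le S h (i j : 'I_n) :
  (top_score S h j <= top_score S h i)%N =
  if (i \in S) && (j \in S) then (h j <= h i)%N else (i \in S) || (j \notin S) && (j <= i)%N.
Proof.
rewrite /top_score; case: (i \in S); case: (j \in S) => //=; rewrite ?leq_add2l //.
  by apply: leq_trans (ltnW (ltn_ord j)) _; rewrite leq_addr.
by apply/negbTE; rewrite -ltnNge; apply: leq_trans (ltn_ord i) _; rewrite leq_addr.
Qed.

Lemma top_score_inj S h : {in S &, injective h} -> injective (top_score S h).
Proof.
have out_lt (x : 'I_n) a : (x < n + a)%N by apply: leq_trans (ltn_ord x) (leq_addr _ _).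
move=> h_inj x y; rewrite /top_score.
case: ifP => xS; case: ifP => yS.
- by move/addnI/h_inj; apply.
- by move=> eq_xy; have := out_lt y (h x); rewrite -eq_xy ltnn.
- by move=> eq_xy; have := out_lt x (h y); rewrite eq_xy ltnn.
- exact: ord_inj.
Qed.

Lemma lin_top_scoreB (c : vec R n) S h1 h2 : uniq S ->
  lin c (charvec R (score_order (top_score S h1))) -
  lin c (charvec R (score_order (top_score S h2))) =
  \sum_(i <- S) \sum_(j <- S) coef c i j * ((h1 j <= h1 i)%N%:R - (h2 j <= h2 i)%N%:R).
Proof.
move=> uniqS; rewrite !lin_charvec -sumrB (bigID (fun k => k \in S)) /=.
rewrite [X in _ + X]big1 ?addr0 => [|i /negbTE iS]; last first.
  by rewrite -sumrB big1 // => j _; rewrite !ffunE !top_score_le iS subrr.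
rewrite -big_uniq //; apply: eq_big_seq => i iS.
rewrite -sumrB (bigID (fun k => k \in S)) /=.
rewrite [X in _ + X]big1 ?addr0 => [|j /negbTE jS]; last first.
  by rewrite !ffunE !top_score_le iS jS subrr.
rewrite -big_uniq //; apply: eq_big_seq => j jS.
by rewrite !ffunE !top_score_le iS jS mulrBr.
Qed.

Lemma weak_order_eqn_trivial (c : vec R n) (c0 : R) :
  (forall W, is_weak_order W -> lin c (charvec R W) + c0 = 0) ->
  (forall a, c a = 0) /\ c0 = 0.
Proof.
move=> eqn.
have top_eqn S h : lin c (charvec R (score_order (top_score S h))) = - c0.
  by apply/eqP; rewrite -addr_eq0; apply/eqP/eqn/score_order_weak.
have c_0 a : c a = 0.
  rewrite -coef_arc; case: (val a) (valP a) => x y /= xy.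
  have := lin_top_scoreB c (fun=> 0%N) (fun z => (z == y) : nat) (_ : uniq [:: x; y]).
  rewrite !top_eqn subrr !big_cons !big_nil !coef_diag eqxx (negbTE xy) /=.
  by rewrite inE xy => /(_ isT); lra.
split=> //; have := top_eqn [::] (fun=> 0%N).
by rewrite /lin big1 => [|a _]; [lra | rewrite c_0 mul0r].
Qed.

Lemma PWO_full_dim : has_dim (@in_PWO R n) #|{: arc n}|.
Proof.
split=> [|p _ /aff_indep_card]; last by rewrite addn1 ltnn.
pose T := {W : relN n | weak_orderb W}.
have [q indep] : exists q : 'I_#|{: arc n}|.+1 -> T,
    aff_indep (fun k => charvec R (val (q k))).
  apply: (exists_aff_indep_full (f := fun W : T => charvec R (val W))) => c c0 vanish.
  apply: weak_order_eqn_trivial => W /weak_orderP weakW.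
  exact: (vanish (exist _ W weakW)).
exists (fun k => charvec R (val (q k))).
by split=> // k; apply/charvec_in_PWO/weak_orderP/valP.
Qed.

End WeakOrders.

Section Inequality.
Variables (R : realFieldType) (n : nat) (i1 i2 : 'I_n).
Hypothesis i1_neq_i2 : i1 != i2.
Local Notation pi := (pi_ineq R i1 i2).
Local Notation pi0 := (pi0_ineq R n).

Definition inNc (x : 'I_n) := (x != i1) && (x != i2).

Lemma inNc_neq1 j : inNc j -> (j == i1) = false.
Proof. by case/andP => /negbTE. Qed.

Lemma inNc_neq2 j : inNc j -> (j == i2) = false.
Proof. by case/andP => _ /negbTE. Qed.

Let i2_neq_i1 : (i2 == i1) = false. Proof. by rewrite eq_sym; exact/negbTE. Qed.

Lemma coef_pi_i1i2 : coef pi i1 i2 = 0.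
Proof. by rewrite (coefE _ i1_neq_i2) /pi_ineq /= !eqxx i2_neq_i1 (negbTE i1_neq_i2). Qed.

Lemma coef_pi_i2i1 : coef pi i2 i1 = -1.
Proof. by rewrite (coefE _ (negbT i2_neq_i1)) /pi_ineq /= !eqxx i2_neq_i1 (negbTE i1_neq_i2). Qed.

Section NcCoefficients.
Variables j k : 'I_n.
Hypotheses (j_Nc : inNc j) (k_Nc : inNc k).

Let j_neq1 := inNc_neq1 j_Nc.
Let j_neq2 := inNc_neq2 j_Nc.
Let neq1_j : (i1 == j) = false. Proof. by rewrite eq_sym. Qed.
Let neq2_j : (i2 == j) = false. Proof. by rewrite eq_sym. Qed.

Lemma coef_pi_i1j : coef pi i1 j = 1.
Proof. by rewrite (coefE _ (negbT neq1_j)) /pi_ineq /= eqxx j_neq1 j_neq2. Qed.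

Lemma coef_pi_ji1 : coef pi j i1 = 1.
Proof. by rewrite (coefE _ (negbT j_neq1)) /pi_ineq /= eqxx j_neq1 j_neq2 (negbTE i1_neq_i2). Qed.

Lemma coef_pi_i2j : coef pi i2 j = 1.
Proof. by rewrite (coefE _ (negbT neq2_j)) /pi_ineq /= eqxx j_neq1 j_neq2 i2_neq_i1. Qed.

Lemma coef_pi_ji2 : coef pi j i2 = 0.
Proof. by rewrite (coefE _ (negbT j_neq2)) /pi_ineq /= eqxx j_neq1 j_neq2 i2_neq_i1. Qed.

Lemma coef_pi_jk : j != k -> coef pi j k = -1.
Proof.
move=> jk; rewrite (coefE _ jk) /pi_ineq /= j_neq1 j_neq2.
by rewrite (inNc_neq1 k_Nc) (inNc_neq2 k_Nc).
Qed.

End NcCoefficients.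

Lemma sum_i1_i2_Nc (F : 'I_n -> R) : \sum_i F i = F i1 + F i2 + \sum_(i | inNc i) F i.
Proof. by rewrite (bigD1 i1) //= (bigD1 i2) 1?eq_sym //= addrA. Qed.

Definition mNc : R := \sum_(j | inNc j) 1.

Lemma sum_pairs_Nc : \sum_(j | inNc j) \sum_(k | inNc k && (k != j)) 1 = mNc * (mNc - 1).
Proof.
rewrite [RHS]mulr_suml; apply: eq_bigr => j j_Nc.
by rewrite mul1r /mNc [in RHS](bigD1 j) //= addrC addrK.
Qed.

Lemma exchange_pairs_Nc (F : 'I_n -> 'I_n -> R) :
  \sum_(j | inNc j) \sum_(k | inNc k && (k != j)) F k j =
  \sum_(j | inNc j) \sum_(k | inNc k && (k != j)) F j k.
Proof.
rewrite (exchange_big_dep inNc) /=; last by move=> j k _ /andP [].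
by apply: eq_bigr => j j_Nc; apply: eq_bigl => k; rewrite j_Nc eq_sym.
Qed.

Lemma twice_pi0 : 2 * pi0 = 4 * mNc - mNc * (mNc - 1).
Proof.
have : (n%:R : R) = mNc + 2.
  by rewrite -[n in LHS]card_ord -sumr_const sum_i1_i2_Nc addrC addrA.
by rewrite /pi0_ineq => ->; field.
Qed.

Section TotalOrder.
Variable W : relN n.
Local Notation w x y := ((W (x, y))%:R : R).
Local Notation tie x y := ((W (x, y) && W (y, x))%:R : R).

Lemma lin_pi_charvec :
  lin pi (charvec R W) =
  \sum_(j | inNc j) (w i1 j + w j i1 + w i2 j) - w i2 i1
  - \sum_(j | inNc j) \sum_(k | inNc k && (k != j)) w j k.
Proof.
have row_split i : \sum_j coef pi i j * w i j =
    coef pi i i1 * w i i1 + coef pi i i2 * w i i2 + \sum_(j | inNc j) coef pi i j * w i j.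
  by rewrite sum_i1_i2_Nc.
rewrite lin_charvec sum_i1_i2_Nc !row_split !coef_diag coef_pi_i1i2 coef_pi_i2i1.
have -> : \sum_(j | inNc j) coef pi i1 j * w i1 j = \sum_(j | inNc j) w i1 j.
  by apply: eq_bigr => j j_Nc; rewrite coef_pi_i1j ?mul1r.
have -> : \sum_(j | inNc j) coef pi i2 j * w i2 j = \sum_(j | inNc j) w i2 j.
  by apply: eq_bigr => j j_Nc; rewrite coef_pi_i2j ?mul1r.
rewrite (eq_bigr _ (fun i _ => row_split i)).
have -> : \sum_(i | inNc i) (coef pi i i1 * w i i1 + coef pi i i2 * w i i2
      + \sum_(j | inNc j) coef pi i j * w i j) =
    \sum_(i | inNc i) w i i1 - \sum_(i | inNc i) \sum_(j | inNc j && (j != i)) w i j.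
  rewrite -sumrB; apply: eq_bigr => i i_Nc.
  rewrite coef_pi_ji1 ?coef_pi_ji2 // mul1r mul0r addr0.
  rewrite (bigD1 i) //= coef_diag mul0r add0r -sumrN; congr (_ + _).
  by apply: eq_bigr => j /andP [j_Nc ji]; rewrite coef_pi_jk 1?eq_sym ?mulN1r.
rewrite !big_split /=; lra.
Qed.

Hypothesis W_total : forall x y, W (x, y) || W (y, x).

Lemma total_add_tie x y : w x y + w y x = 1 + tie x y.
Proof.
by move: (W_total x y); case: (W (x, y)); case: (W (y, x)) => //= _; rewrite ?addr0 ?add0r.
Qed.

Definition ties_i1 := \sum_(j | inNc j) tie i1 j.
Definition above_i2 := \sum_(j | inNc j) w i2 j.
Definition ties_Nc := \sum_(j | inNc j) \sum_(k | inNc k && (k != j)) tie j k.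

Lemma pi_gap :
  2 * (pi0 - lin pi (charvec R W)) = 2 * mNc - 2 * (ties_i1 + above_i2 - w i2 i1) + ties_Nc.
Proof.
have sum_i1 : \sum_(j | inNc j) (w i1 j + w j i1 + w i2 j) = mNc + ties_i1 + above_i2.
  by under eq_bigr do rewrite total_add_tie; rewrite !big_split.
have sum_pairs :
    2 * \sum_(j | inNc j) \sum_(k | inNc k && (k != j)) w j k = mNc * (mNc - 1) + ties_Nc.
  rewrite mulr2n mulrDl mul1r -[X in _ + X = _](exchange_pairs_Nc (fun j k => w j k)).
  rewrite -sum_pairs_Nc /ties_Nc -!big_split /=; apply: eq_bigr => j _.
  by rewrite -!big_split /=; apply: eq_bigr => k _; exact: total_add_tie.
have := twice_pi0; rewrite lin_pi_charvec sum_i1; lra.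
Qed.

Lemma lin_pi_tight :
  (forall j, inNc j -> ~~ W (j, i1)) -> (forall j, inNc j -> W (i2, j)) -> ~~ W (i2, i1) ->
  (forall j k, inNc j -> inNc k -> j != k -> ~~ (W (j, k) && W (k, j))) ->
  lin pi (charvec R W) = pi0.
Proof.
move=> Nc_below_i1 i2_above_Nc /negbTE W21 strict_Nc.
have ties_i1_0 : ties_i1 = 0.
  by rewrite /ties_i1 big1 // => j /Nc_below_i1 /negbTE ->; rewrite andbF.
have above_i2_m : above_i2 = mNc by apply: eq_bigr => j /i2_above_Nc ->.
have ties_Nc_0 : ties_Nc = 0.
  rewrite /ties_Nc big1 // => j j_Nc; rewrite big1 // => k /andP [k_Nc k_neq].
  by rewrite (negbTE (strict_Nc _ _ j_Nc k_Nc _)) // eq_sym.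
have := pi_gap; rewrite ties_i1_0 above_i2_m ties_Nc_0 W21 /=; lra.
Qed.

Lemma ties_Nc_ge0 : 0 <= ties_Nc.
Proof. by do 2!apply: sumr_ge0 => ? _. Qed.

Lemma above_i2_le : above_i2 <= mNc.
Proof. by apply: ler_sum => j _; rewrite lern1 leq_b1. Qed.

Hypothesis W_trans : forall x y z, W (x, y) -> W (y, z) -> W (x, z).

Lemma ties_i1_le : 2 * ties_i1 <= 2 + ties_Nc.
Proof.
case: (pickP (fun j => inNc j && (W (i1, j) && W (j, i1)))); last first.
  move=> no_tie; rewrite /ties_i1 big1 ?mulr0; first by have := ties_Nc_ge0; lra.
  by move=> j j_Nc; have := no_tie j; rewrite /= j_Nc /= => ->.
move=> j0 /andP [j0_Nc tie_j0].
pose ties_j0 := \sum_(k | inNc k && (k != j0)) tie j0 k.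
have ties_i1_j0 : ties_i1 <= 1 + ties_j0.
  rewrite /ties_i1 (bigD1 j0) //= tie_j0 lerD2l; apply: ler_sum => k /andP [k_Nc _].
  case/andP: tie_j0 => W1j0 Wj01.
  case: (boolP (W (i1, k) && W (k, i1))) => [/andP [W1k Wk1]|_]; last by rewrite ler0n.
  by rewrite (W_trans Wj01 W1k) (W_trans Wk1 W1j0).
pose ties_rest := \sum_(j | inNc j && (j != j0)) \sum_(k | inNc k && (k != j)) tie j k.
have ties_split : ties_Nc = ties_j0 + ties_rest by rewrite /ties_Nc (bigD1 j0).
(* each tie (j0, j) is counted again as (j, j0) in ties_rest *)
have : ties_j0 <= ties_rest.
  apply: ler_sum => j /andP [j_Nc j_neq]; rewrite (bigD1 j0) /=; last by rewrite j0_Nc eq_sym.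
  by rewrite andbC lerDl; apply: sumr_ge0 => ? _.
lra.
Qed.

Lemma ties_i1_above_i2_le : ~~ W (i2, i1) -> ties_i1 + above_i2 <= mNc.
Proof.
move=> /negbTE W21; rewrite -big_split; apply: ler_sum => j j_Nc.
case: (boolP (W (i1, j) && W (j, i1))) => [/andP [_ Wj1]|_]; last by case: (W (i2, j)) => /=; lra.
by case W2j: (W (i2, j)); [rewrite (W_trans W2j Wj1) in W21 | rewrite /=; lra].
Qed.

Lemma lin_pi_le : lin pi (charvec R W) <= pi0.
Proof.
have := pi_gap; have := ties_Nc_ge0; have := above_i2_le; have := ties_i1_le.
case: (boolP (W (i2, i1))) => [_|/ties_i1_above_i2_le]; rewrite /=; lra.
Qed.

End TotalOrder.

Lemma lin_pi_PWO_le x : in_PWO x -> lin pi x <= pi0.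
Proof. by apply: PWO_lin_le => W [_ [W_trans W_total]]; exact: lin_pi_le. Qed.

Definition face_eqn (c : vec R n) (c0 : R) :=
  forall W, is_weak_order W -> lin pi (charvec R W) = pi0 -> lin c (charvec R W) + c0 = 0.

Definition pattern (u k : 'I_n) (a1 a2 au ak : nat) (x : 'I_n) : nat :=
  if x == i1 then a1 else if x == i2 then a2 else if x == u then au else ak.

Definition pattern_order (u k : 'I_n) a1 a2 au ak : relN n :=
  score_order (top_score [:: i1; i2; u; k] (pattern u k a1 a2 au ak)).

Definition tight_pattern (a1 a2 au ak : nat) : bool :=
  ((au <= a1) + (ak <= a1) + (au <= a2) + (ak <= a2) + (a1 <= au) + (a1 <= ak) ==
   (a1 <= a2) + (ak <= au) + (au <= ak) + 3)%N.

Section FourPoints.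
Context {u k : 'I_n}.
Hypotheses (u_Nc : inNc u) (k_Nc : inNc k) (u_neq_k : u != k).

Let u_neq1 := inNc_neq1 u_Nc.
Let u_neq2 := inNc_neq2 u_Nc.
Let k_neq1 := inNc_neq1 k_Nc.
Let k_neq2 := inNc_neq2 k_Nc.
Let k_neq_u : (k == u) = false. Proof. by rewrite eq_sym; exact/negbTE. Qed.

Lemma lin_pattern_orderB (c : vec R n) a1 a2 au ak b1 b2 bu bk :
  let d x y x' y' := ((y <= x)%N%:R - (y' <= x')%N%:R : R) in
  lin c (charvec R (pattern_order u k a1 a2 au ak)) -
  lin c (charvec R (pattern_order u k b1 b2 bu bk)) =
  coef c i1 i2 * d a1 a2 b1 b2 + coef c i1 u * d a1 au b1 bu + coef c i1 k * d a1 ak b1 bk +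
  coef c i2 i1 * d a2 a1 b2 b1 + coef c i2 u * d a2 au b2 bu + coef c i2 k * d a2 ak b2 bk +
  coef c u i1 * d au a1 bu b1 + coef c u i2 * d au a2 bu b2 + coef c u k * d au ak bu bk +
  coef c k i1 * d ak a1 bk b1 + coef c k i2 * d ak a2 bk b2 + coef c k u * d ak au bk bu.
Proof.
rewrite /= lin_top_scoreB; last first.
  rewrite /= !inE negb_or i1_neq_i2 !(eq_sym i1) !(eq_sym i2).
  by rewrite u_neq1 u_neq2 k_neq1 k_neq2 u_neq_k.
rewrite !big_cons !big_nil !coef_diag /pattern !eqxx i2_neq_i1.
rewrite u_neq1 u_neq2 k_neq1 k_neq2 k_neq_u /=.
ring.
Qed.

Lemma pattern_order_total a1 a2 au ak x y :
  pattern_order u k a1 a2 au ak (x, y) || pattern_order u k a1 a2 au ak (y, x).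
Proof. by rewrite !ffunE leq_total. Qed.

Lemma lin_pi_base : lin pi (charvec R (pattern_order u k 3 2 1 0)) = pi0.
Proof.
have S_i1 : i1 \in [:: i1; i2; u; k] by rewrite mem_head.
have S_i2 : i2 \in [:: i1; i2; u; k] by rewrite !inE eqxx orbT.
have pattern_Nc j : inNc j -> pattern u k 3 2 1 0 j = (j == u : nat).
  by move=> j_Nc; rewrite /pattern (inNc_neq1 j_Nc) (inNc_neq2 j_Nc); case: (j == u).
apply: lin_pi_tight => [x y|j j_Nc|j j_Nc||j j' j_Nc j'_Nc j_neq]; rewrite ?pattern_order_total //.
- rewrite ffunE top_score_le S_i1 andbT /= orbF (pattern_Nc j j_Nc).
  by case: ifP => [_|->] //; rewrite /pattern eqxx; case: (j == u).
- rewrite ffunE top_score_le S_i2 /= (pattern_Nc j j_Nc).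
  by case: ifP => // _; rewrite /pattern eqxx i2_neq_i1; case: (j == u).
- by rewrite ffunE top_score_le S_i1 S_i2 /pattern !eqxx i2_neq_i1.
rewrite !ffunE /= -eqn_leq; apply: contra j_neq => /eqP /top_score_inj -> //.
move=> x y; rewrite !inE /pattern => /or4P [] /eqP-> /or4P [] /eqP->;
  by rewrite ?eqxx ?i2_neq_i1 ?u_neq1 ?u_neq2 ?k_neq1 ?k_neq2 ?k_neq_u; move/eqP.
Qed.

Lemma lin_pi_pattern a1 a2 au ak :
  lin pi (charvec R (pattern_order u k a1 a2 au ak)) =
  pi0 + ((au <= a1) + (ak <= a1) + (au <= a2) + (ak <= a2) + (a1 <= au) + (a1 <= ak))%N%:R
      - ((a1 <= a2) + (ak <= au) + (au <= ak) + 3)%N%:R.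
Proof.
have := lin_pattern_orderB pi a1 a2 au ak 3 2 1 0; rewrite lin_pi_base /=.
rewrite coef_pi_i1i2 coef_pi_i2i1 !coef_pi_i1j ?coef_pi_ji1 ?coef_pi_i2j ?coef_pi_ji2 //.
rewrite !coef_pi_jk // 1?eq_sym // !natrD.
lra.
Qed.

Lemma lin_pi_tight_pattern a1 a2 au ak :
  tight_pattern a1 a2 au ak -> lin pi (charvec R (pattern_order u k a1 a2 au ak)) = pi0.
Proof. by rewrite lin_pi_pattern => /eqP ->; rewrite addrK. Qed.

Lemma face_eqn_patterns c c0 a1 a2 au ak b1 b2 bu bk :
  tight_pattern a1 a2 au ak -> tight_pattern b1 b2 bu bk -> face_eqn c c0 ->
  lin c (charvec R (pattern_order u k a1 a2 au ak)) -
  lin c (charvec R (pattern_order u k b1 b2 bu bk)) = 0.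
Proof.
move=> /lin_pi_tight_pattern tight_a /lin_pi_tight_pattern tight_b vanish.
have := vanish _ (score_order_weak _) tight_a; have := vanish _ (score_order_weak _) tight_b.
lra.
Qed.

Lemma face_eqn_Nc_i2 c c0 : face_eqn c c0 -> coef c u i2 = 0.
Proof.
by move=> /(@face_eqn_patterns c c0 3 2 2 0 3 2 1 0 isT isT); rewrite lin_pattern_orderB /=; lra.
Qed.

Lemma face_eqn_Nc_sym c c0 : face_eqn c c0 -> coef c u k = coef c k u.
Proof.
by move=> /(@face_eqn_patterns c c0 3 2 0 1 3 2 1 0 isT isT); rewrite lin_pattern_orderB /=; lra.
Qed.

Lemma face_eqn_i1i2 c c0 : face_eqn c c0 -> coef c i1 i2 + coef c k i2 = 0.
Proof.
by move=> /(@face_eqn_patterns c c0 1 2 0 1 2 2 0 2 isT isT); rewrite lin_pattern_orderB /=; lra.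
Qed.

Lemma face_eqn_Nc_i1 c c0 : face_eqn c c0 -> coef c u i1 + coef c u k = 0.
Proof.
by move=> /(@face_eqn_patterns c c0 1 2 0 1 1 2 1 1 isT isT); rewrite lin_pattern_orderB /=; lra.
Qed.

Lemma face_eqn_i1_Nc c c0 : face_eqn c c0 -> coef c i1 u + coef c k u = 0.
Proof.
by move=> /(@face_eqn_patterns c c0 0 2 1 0 1 2 1 1 isT isT); rewrite lin_pattern_orderB /=; lra.
Qed.

Lemma face_eqn_i2i1 c c0 :
  face_eqn c c0 -> coef c i1 i2 + coef c k i2 - coef c i2 i1 - coef c i2 k = 0.
Proof.
by move=> /(@face_eqn_patterns c c0 2 1 0 2 1 2 0 1 isT isT); rewrite lin_pattern_orderB /=; lra.
Qed.

Lemma face_eqn_i2_Nc c c0 : face_eqn c c0 -> coef c k i1 + coef c k i2 - coef c i2 k = 0.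
Proof.
by move=> /(@face_eqn_patterns c c0 3 2 0 1 2 1 0 2 isT isT); rewrite lin_pattern_orderB /=; lra.
Qed.

End FourPoints.

Section Face.
Hypothesis n_ge4 : (4 <= n)%N.

Lemma exists_Nc_neq (j : 'I_n) : exists2 k, inNc k & k != j.
Proof.
have /card_gt0P [k] : (0 < #|[predC [:: i1; i2; j]]|)%N.
  have := cardC (mem [:: i1; i2; j]); have := card_size [:: i1; i2; j].
  by rewrite card_ord /=; set s := #|_|; set sC := #|_|; lia.
by rewrite !inE !negb_or => /and3P [k1 k2 kj]; exists k => //; apply/andP.
Qed.

Section FaceEquations.
Variables (c : vec R n) (c0 : R).
Hypothesis vanish : face_eqn c c0.

Lemma face_coef_Nc_i2 j : inNc j -> coef c j i2 = 0.
Proof.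
move=> j_Nc; have [k k_Nc k_neq] := exists_Nc_neq j.
have j_neq : j != k by rewrite eq_sym.
exact: (face_eqn_Nc_i2 j_Nc k_Nc j_neq vanish).
Qed.

Lemma face_coef_Nc_i1 j j' : inNc j -> inNc j' -> coef c j i1 = coef c j' i1.
Proof.
move=> j_Nc j'_Nc; have [<-|j_neq] := eqVneq j j'; first by [].
have j'_neq : j' != j by rewrite eq_sym.
have := face_eqn_Nc_i1 j_Nc j'_Nc j_neq vanish; have := face_eqn_Nc_i1 j'_Nc j_Nc j'_neq vanish.
have := face_eqn_Nc_sym j_Nc j'_Nc j_neq vanish; lra.
Qed.

Lemma face_coef_Nc_Nc j j' : inNc j -> inNc j' -> j != j' -> coef c j j' = - coef c j i1.
Proof. by move=> j_Nc j'_Nc j_neq; have := face_eqn_Nc_i1 j_Nc j'_Nc j_neq vanish; lra. Qed.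

Lemma face_coef_i1_Nc j : inNc j -> coef c i1 j = coef c j i1.
Proof.
move=> j_Nc; have [k k_Nc k_neq] := exists_Nc_neq j.
have j_neq : j != k by rewrite eq_sym.
have := face_eqn_i1_Nc j_Nc k_Nc j_neq vanish; have := face_coef_Nc_Nc k_Nc j_Nc k_neq.
have := face_coef_Nc_i1 j_Nc k_Nc; lra.
Qed.

Lemma face_coef_i2_Nc j : inNc j -> coef c i2 j = coef c j i1.
Proof.
move=> j_Nc; have [k k_Nc k_neq] := exists_Nc_neq j.
have := face_eqn_i2_Nc k_Nc j_Nc k_neq vanish; have := face_coef_Nc_i2 j_Nc; lra.
Qed.

Lemma face_coef_i1i2 : coef c i1 i2 = 0.
Proof.
have [k k_Nc _] := exists_Nc_neq i1; have [u u_Nc u_neq] := exists_Nc_neq k.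
by have := face_eqn_i1i2 u_Nc k_Nc u_neq vanish; rewrite (face_coef_Nc_i2 k_Nc) addr0.
Qed.

Lemma face_coef_i2i1 j : inNc j -> coef c i2 i1 = - coef c j i1.
Proof.
move=> j_Nc; have [u u_Nc u_neq] := exists_Nc_neq j.
have := face_eqn_i2i1 u_Nc j_Nc u_neq vanish; have := face_coef_i2_Nc j_Nc.
rewrite face_coef_i1i2 face_coef_Nc_i2 //; lra.
Qed.

Lemma face_coef_pi k : inNc k -> forall a, c a = coef c k i1 * pi a.
Proof.
move=> k_Nc a; rewrite -coef_arc -[pi a]coef_arc; case: (val a) (valP a) => x y /=.
have Nc_of z : z != i1 -> z != i2 -> inNc z by move=> *; apply/andP.
have [->|x1] := eqVneq x i1 => [y_neq|].
  have [->|y2] := eqVneq y i2; first by rewrite face_coef_i1i2 coef_pi_i1i2 mulr0.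
  have y_Nc : inNc y by apply: Nc_of; rewrite // eq_sym.
  by rewrite face_coef_i1_Nc // coef_pi_i1j // mulr1 (face_coef_Nc_i1 y_Nc k_Nc).
have [->|x2] := eqVneq x i2 => [y_neq|].
  have [->|y1] := eqVneq y i1; first by rewrite (face_coef_i2i1 k_Nc) coef_pi_i2i1 mulrN1.
  have y_Nc : inNc y by apply: Nc_of; rewrite // eq_sym.
  by rewrite face_coef_i2_Nc // coef_pi_i2j // mulr1 (face_coef_Nc_i1 y_Nc k_Nc).
move=> xy; have x_Nc := Nc_of x x1 x2.
have [->|y1] := eqVneq y i1; first by rewrite coef_pi_ji1 // mulr1 (face_coef_Nc_i1 x_Nc k_Nc).
have [->|y2] := eqVneq y i2; first by rewrite face_coef_Nc_i2 // coef_pi_ji2 // mulr0.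
have y_Nc := Nc_of y y1 y2.
by rewrite face_coef_Nc_Nc // coef_pi_jk // mulrN1 (face_coef_Nc_i1 x_Nc k_Nc).
Qed.

Lemma face_eqn_multiple : exists l, (forall a, c a = l * pi a) /\ c0 = l * - pi0.
Proof.
have [k k_Nc _] := exists_Nc_neq i1; have [u u_Nc u_neq] := exists_Nc_neq k.
have c_pi := face_coef_pi k_Nc; exists (coef c k i1); split=> //.
have base_tight := lin_pi_base u_Nc k_Nc u_neq.
have := vanish (score_order_weak _) base_tight.
have -> : lin c (charvec R (pattern_order u k 3 2 1 0)) = coef c k i1 * pi0.
  by rewrite -base_tight /lin mulr_sumr; apply: eq_bigr => a _; rewrite c_pi mulrA.
lra.
Qed.

End FaceEquations.

Lemma face_aff_indep : exists p : 'I_#|{: arc n}| -> vec R n,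
  (forall k, in_PWO (p k) /\ lin pi (p k) = pi0) /\ aff_indep p.
Proof.
pose T := {W : relN n | weak_orderb W && (lin pi (charvec R W) == pi0)}.
have [q indep] : exists q : 'I_#|{: arc n}| -> T, aff_indep (fun k => charvec R (val (q k))).
  apply: (exists_aff_indep_hyperplane (f := fun W : T => charvec R (val W))) => c c0 vanish.
  apply: face_eqn_multiple => W /weak_orderP weakW /eqP tightW.
  by apply: (vanish (exist _ W _)); rewrite weakW tightW.
exists (fun k => charvec R (val (q k))); split=> // k.
by case/andP: (valP (q k)) => /weak_orderP /charvec_in_PWO ? /eqP.
Qed.

End Face.

End Inequality.

Theorem mainTheorem10 (R : realFieldType) (n : nat) (i1 i2 : 'I_n) :
  (4 <= n)%N -> i1 != i2 ->
  is_facet (@in_PWO R n) (pi_ineq R i1 i2) (pi0_ineq R n).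
Proof.
move=> n_ge4 i1_neq_i2.
have [k k_Nc _] := exists_Nc_neq i1_neq_i2 n_ge4 i1.
have [u u_Nc u_neq] := exists_Nc_neq i1_neq_i2 n_ge4 k.
split; [|split; [|split]].
- exact: lin_pi_PWO_le.
- exists (charvec R (pattern_order i1 i2 u k 3 2 1 0)).
  by split; [apply/charvec_in_PWO/score_order_weak | exact: lin_pi_base].
- (* tying i1 with i2 costs one unit of slack *)
  exists (charvec R (pattern_order i1 i2 u k 3 3 1 0)).
  split; first exact/charvec_in_PWO/score_order_weak.
  by rewrite (lin_pi_pattern R i1_neq_i2 u_Nc k_Nc u_neq) /=; apply/negP => /eqP; lra.
- exists #|{: arc n}|; split; first exact: PWO_full_dim.
  exact: face_aff_indep.
Qed.
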